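(* Let $\psi,\psi_1,\psi_2,\dots$ be Archimedean generators with pseudo-inverses $\varphi,\varphi_1,\varphi_2,\dots$. Then $(\varphi_n)$ converges pointwise to $\varphi$ on $(0,1]$ if and only if $(\psi_n)$ converges uniformly to $\psi$ on $[0,\infty)$.
   Context: An Archimedean generator is a continuous non-increasing $\psi:[0,\infty)\to[0,1]$ with $\psi(0)=1$, $\lim_{z\to\infty}\psi(z)=0$, strictly decreasing on $[0,\inf\{z\in[0,\infty]:\psi(z)=0\}]$ (with $\inf\emptyset=\infty$), normalized so that $\psi(1)=1/2$. Its pseudo-inverse is $\varphi:[0,1]\to[0,\infty]$, $\varphi(y)=\inf\{z\in[0,\infty]:\psi(z)=y\}$. *)

From Stdlib Require Import Reals.
From Coquelicot Require Import Coquelicot.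
Open Scope R_scope.

(* Archimedean generator psi : [0,oo) -> [0,1], represented as psi : R -> R
   whose values outside [0,oo) are irrelevant. *)

(* zero of psi: inf { z in [0,oo) | psi z = 0 } in [0,oo] (inf of empty = +oo) *)
Definition gen_zero (psi : R -> R) : Rbar :=
  Glb_Rbar (fun z => 0 <= z /\ psi z = 0).

Definition archimedean_generator (psi : R -> R) : Prop :=
  (forall z, 0 <= z ->
     filterlim psi (within (fun t => 0 <= t) (locally z)) (locally (psi z))) /\
  (forall z, 0 <= z -> 0 <= psi z <= 1) /\
  (forall x y, 0 <= x -> x <= y -> psi y <= psi x) /\
  psi 0 = 1 /\
  is_lim psi p_infty 0 /\
  (forall x y, 0 <= x -> x < y -> Rbar_le y (gen_zero psi) -> psi y < psi x) /\
  psi 1 = 1/2.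

(* pseudo-inverse phi(y) = inf { z in [0,oo] | psi z = y } in [0,oo].
   Including the point +oo (where psi = 0 by convention) does not change the
   infimum, so it suffices to take the infimum over [0,oo) (inf empty = +oo). *)
Definition pseudo_inverse (psi : R -> R) (y : R) : Rbar :=
  Glb_Rbar (fun z => 0 <= z /\ psi z = y).

Definition unif_conv_nonneg (f : nat -> R -> R) (g : R -> R) : Prop :=
  forall eps : R, 0 < eps -> exists N : nat,
    forall n : nat, (N <= n)%nat -> forall z : R, 0 <= z -> Rabs (f n z - g z) < eps.

(* For a level y in (0,1], a generator takes the value y at exactly one point, because
   it is strictly decreasing as long as it is positive; so phi(y) is that point and
   t <= phi(y) <-> y <= psi(t).  Through this Galois connection, pointwise convergence
   of the psi_n at phi(y) +- eps pins down phi_n(y).  Conversely, convergence of the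
   phi_n at the finitely many levels j/m makes the phi_n(j/m) eventually interleave
   with the strictly decreasing phi(j/m); reading the Galois connection backwards then
   traps psi_n(z) within 2/m of psi(z), uniformly in z. *)

From Stdlib Require Import Reals Lra Lia Classical.
From Coquelicot Require Import Coquelicot.
Open Scope R_scope.

Local Notation pinv g y := (real (pseudo_inverse g y)).

Lemma is_lim_seq_eventually_gt (u : nat -> R) (l t : R) :
  is_lim_seq u l -> t < l -> eventually (fun n => t < u n).
Proof.
  intros Hu Htl. apply is_lim_seq_spec in Hu.
  apply (filter_imp (fun n => Rabs (u n - l) < l - t)).
  - intros n Hn. apply Rabs_def2 in Hn. lra.
  - exact (Hu (mkposreal (l - t) ltac:(lra))).
Qed.

Lemma is_lim_seq_eventually_lt (u : nat -> R) (l t : R) :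
  is_lim_seq u l -> l < t -> eventually (fun n => u n < t).
Proof.
  intros Hu Hlt. apply is_lim_seq_spec in Hu.
  apply (filter_imp (fun n => Rabs (u n - l) < t - l)).
  - intros n Hn. apply Rabs_def2 in Hn. lra.
  - exact (Hu (mkposreal (t - l) ltac:(lra))).
Qed.

Lemma is_lim_seq_of_eventually_bounds (u : nat -> R) (l : R) :
  (forall t, t < l -> eventually (fun n => t < u n)) ->
  (forall t, l < t -> eventually (fun n => u n < t)) ->
  is_lim_seq u l.
Proof.
  intros Hlo Hup. apply is_lim_seq_spec. intros eps.
  apply (filter_imp (fun n => l - eps < u n /\ u n < l + eps)).
  - intros n Hn. apply Rabs_def1; lra.
  - pose proof (cond_pos eps). apply filter_and; [apply Hlo | apply Hup]; lra.
Qed.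

Lemma filter_forall_lt {T : Type} (F : (T -> Prop) -> Prop) {FF : Filter F}
    (Q : nat -> T -> Prop) (m : nat) :
  (forall j, (j < m)%nat -> F (Q j)) -> F (fun x => forall j, (j < m)%nat -> Q j x).
Proof.
  induction m as [|m IH]; intros HQ.
  - apply filter_forall. intros x j Hj. inversion Hj.
  - apply (filter_imp (fun x => (forall j, (j < m)%nat -> Q j x) /\ Q m x)).
    + intros x [Hlt Hm] j Hj.
      destruct (Nat.eq_dec j m) as [->|Hne]; [exact Hm | apply Hlt; lia].
    + apply filter_and; auto.
Qed.

Lemma unif_conv_nonneg_is_lim_seq (f : nat -> R -> R) (g : R -> R) (z : R) :
  unif_conv_nonneg f g -> 0 <= z -> is_lim_seq (fun n => f n z) (g z).
Proof.
  intros Hu Hz. apply is_lim_seq_spec. intros eps.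
  destruct (Hu eps (cond_pos eps)) as [N HN]. exists N. intros n Hn. auto.
Qed.

Section Generator.

Variable g : R -> R.
Hypothesis Hg : archimedean_generator g.

Lemma ag_bounds z : 0 <= z -> 0 <= g z <= 1.
Proof. destruct Hg as (_ & Hb & _). apply Hb. Qed.

Lemma ag_le x t : 0 <= x -> x <= t -> g t <= g x.
Proof. destruct Hg as (_ & _ & Hm & _). apply Hm. Qed.

Lemma ag_eq_0_beyond t : 0 <= t -> ~ Rbar_le t (gen_zero g) -> g t = 0.
Proof.
  intros Ht Hbeyond.
  destruct (classic (exists s, 0 <= s /\ g s = 0 /\ s < t)) as [[s (Hs & Hgs & Hst)]|Hnone].
  - pose proof (ag_le s t Hs (Rlt_le _ _ Hst)). pose proof (ag_bounds t Ht). lra.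
  - exfalso. apply Hbeyond, (proj2 (Glb_Rbar_correct _)).
    intros s [Hs Hgs]. simpl. apply Rnot_lt_le. intros Hst. apply Hnone. eauto.
Qed.

Lemma ag_lt x t : 0 <= x -> x < t -> 0 < g x -> g t < g x.
Proof.
  intros Hx Hxt Hgx.
  destruct (classic (Rbar_le t (gen_zero g))) as [Hle|Hbeyond].
  - destruct Hg as (_ & _ & _ & _ & _ & Hs & _). auto.
  - rewrite ag_eq_0_beyond; auto. lra.
Qed.

Lemma ag_continuity_pt t : 0 < t -> continuity_pt g t.
Proof.
  intros Ht. apply continuity_pt_filterlim. intros P HP.
  destruct Hg as [Hc _]. specialize (Hc t (Rlt_le _ _ Ht) P HP).
  unfold filtermap in *.
  apply (filter_imp (fun s => (0 <= s -> P (g s)) /\ 0 < s)).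
  - intros s [HPs Hs]. apply HPs. lra.
  - apply filter_and; [exact Hc | exact (open_gt 0 t Ht)].
Qed.

Lemma ag_attains y : 0 < y <= 1 -> exists t, 0 <= t /\ g t = y.
Proof.
  intros Hy. destruct Hg as (Hc & _ & _ & Hg0 & Hlim & _).
  destruct (Req_dec y 1) as [->|Hy1]; [exists 0; split; [lra | exact Hg0]|].
  assert (Ha : exists a, 0 < a /\ y < g a).
  { destruct (Hc 0 (Rle_refl 0) (fun u => y < u)) as [d Hd].
    { apply open_gt. lra. }
    exists (d / 2). pose proof (cond_pos d). split; [lra|].
    apply Hd; [|lra]. change (Rabs (d / 2 - 0) < d).
    rewrite Rminus_0_r, Rabs_pos_eq; lra. }
  destruct Ha as [a [Ha Hga]].
  (* The intermediate value theorem is applied on [a, b] with a > 0, where g is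
     two-sided continuous. *)
  destruct (Hlim (fun u => u < y)) as [M HM].
  { apply open_lt. exact (proj1 Hy). }
  set (b := Rmax M a + 1).
  destruct (Ranalysis5.IVT_interv (fun t => y - g t) a b) as [t [Hab Ht]].
  - intros s Hs. apply continuity_pt_minus.
    + apply continuity_pt_const. intros u v. reflexivity.
    + apply ag_continuity_pt. lra.
  - unfold b. pose proof (Rmax_r M a). lra.
  - lra.
  - assert (g b < y) by (apply HM; unfold b; pose proof (Rmax_l M a); lra). lra.
  - exists t. split; lra.
Qed.

Lemma pinv_eq t y : 0 <= t -> 0 < y -> g t = y -> pseudo_inverse g y = Finite t.
Proof.
  intros Ht Hy Hgt. apply is_glb_Rbar_unique. split.
  - intros s [Hs Hgs]. simpl. apply Rnot_lt_le. intros Hst.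
    pose proof (ag_lt s t Hs Hst ltac:(lra)). lra.
  - intros b Hb. apply Hb. auto.
Qed.

Section Level.

Variable y : R.
Hypothesis Hy : 0 < y <= 1.

Lemma pinv_finite : pseudo_inverse g y = Finite (pinv g y).
Proof.
  destruct (ag_attains y Hy) as [t [Ht Hgt]].
  rewrite (pinv_eq t y); auto. lra.
Qed.

Lemma pinv_ge0 : 0 <= pinv g y.
Proof.
  destruct (ag_attains y Hy) as [t [Ht Hgt]].
  rewrite (pinv_eq t y); simpl; auto. lra.
Qed.

Lemma ag_pinv : g (pinv g y) = y.
Proof.
  destruct (ag_attains y Hy) as [t [Ht Hgt]].
  rewrite (pinv_eq t y); simpl; auto. lra.
Qed.

Lemma pinv_gt_iff t : 0 <= t -> (pinv g y < t <-> g t < y).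
Proof.
  intros Ht. pose proof pinv_ge0 as Hge0. pose proof ag_pinv as Hgy. split; intros H.
  - rewrite <- Hgy. apply ag_lt; auto. lra.
  - apply Rnot_le_lt. intros Hle. pose proof (ag_le t (pinv g y) Ht Hle). lra.
Qed.

Lemma pinv_lt_iff t : 0 <= t -> (t < pinv g y <-> y < g t).
Proof.
  intros Ht. pose proof pinv_ge0 as Hge0. pose proof ag_pinv as Hgy. split; intros H.
  - pose proof (ag_le t (pinv g y) Ht (Rlt_le _ _ H)).
    rewrite <- Hgy. apply ag_lt; auto. lra.
  - apply Rnot_le_lt. intros Hle. pose proof (ag_le (pinv g y) t Hge0 Hle). lra.
Qed.

Lemma pinv_le_iff t : 0 <= t -> (t <= pinv g y <-> y <= g t).
Proof.
  intros Ht. pose proof (pinv_gt_iff t Ht) as Hiff. split; intros H.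
  - apply Rnot_lt_le. intros Hlt. apply Hiff in Hlt. lra.
  - apply Rnot_lt_le. intros Hlt. apply Hiff in Hlt. lra.
Qed.

End Level.

Lemma pinv_decreasing y y' : 0 < y -> y < y' <= 1 -> pinv g y' < pinv g y.
Proof.
  intros Hy Hyy'. assert (Hy' : 0 < y' <= 1) by lra.
  apply pinv_lt_iff; [lra | apply pinv_ge0; auto |].
  rewrite ag_pinv; lra.
Qed.

End Generator.

Lemma pinv_cvg_of_pointwise_cvg (psi : R -> R) (psis : nat -> R -> R) :
  archimedean_generator psi ->
  (forall n, archimedean_generator (psis n)) ->
  (forall t, 0 <= t -> is_lim_seq (fun n => psis n t) (psi t)) ->
  forall y, 0 < y <= 1 ->
    is_lim_seq (fun n => pinv (psis n) y) (pseudo_inverse psi y).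
Proof.
  intros Hpsi Hpsis Hcvg y Hy. rewrite pinv_finite; auto.
  pose proof (pinv_ge0 psi Hpsi y Hy).
  apply is_lim_seq_of_eventually_bounds; intros t Ht.
  - destruct (Rlt_or_le t 0) as [Ht0|Ht0].
    + apply filter_forall. intros n. pose proof (pinv_ge0 _ (Hpsis n) y Hy). lra.
    + apply (filter_imp (fun n => y < psis n t)).
      * intros n. apply pinv_lt_iff; auto.
      * apply (is_lim_seq_eventually_gt _ _ _ (Hcvg t Ht0)).
        apply pinv_lt_iff; auto.
  - apply (filter_imp (fun n => psis n t < y)).
    + intros n. apply pinv_gt_iff; auto. lra.
    + apply (is_lim_seq_eventually_lt _ _ _ (Hcvg t ltac:(lra))).
      apply pinv_gt_iff; auto. lra.
Qed.

Definition level (m j : nat) : R := INR j / INR m.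

Section Levels.

Variable m : nat.
Hypothesis Hm : (0 < m)%nat.

Let Hm_pos : 0 < INR m.
Proof. apply lt_0_INR. exact Hm. Qed.

Lemma level_0 : level m 0 = 0.
Proof. unfold level. simpl. field. exact (Rgt_not_eq _ _ Hm_pos). Qed.

Lemma level_S j : level m (S j) = level m j + / INR m.
Proof. unfold level. rewrite S_INR. field. exact (Rgt_not_eq _ _ Hm_pos). Qed.

Lemma level_pos j : (0 < j)%nat -> (j <= m)%nat -> 0 < level m j <= 1.
Proof.
  intros Hj Hjm. pose proof Hm_pos. apply lt_0_INR in Hj. apply le_INR in Hjm.
  unfold level. split.
  - apply Rdiv_lt_0_compat; lra.
  - apply Rle_div_l; lra.
Qed.

Lemma level_ge_1 j : (m <= j)%nat -> 1 <= level m j.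
Proof.
  intros Hmj. pose proof Hm_pos. apply le_INR in Hmj. unfold level.
  apply Rle_div_r; lra.
Qed.

Lemma level_bracket x : 0 <= x <= 1 ->
  exists k, (k <= m)%nat /\ level m k <= x < level m (S k).
Proof.
  intros Hx. pose proof Hm_pos. destruct (nfloor_ex (x * INR m)) as [k Hk]; [nra|].
  exists k. split; [apply INR_le; nra|].
  unfold level. rewrite S_INR. split; [apply Rle_div_l | apply Rlt_div_r]; lra.
Qed.

Variables (psi : R -> R) (psis : nat -> R -> R).
Hypothesis Hpsi : archimedean_generator psi.
Hypothesis Hpsis : forall n, archimedean_generator (psis n).

Definition interleaved_at (n j : nat) : Prop :=
  pinv (psis n) (level m (S j)) < pinv psi (level m j) /\
  pinv psi (level m (S j)) < pinv (psis n) (level m j).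

Definition interleaved (n : nat) : Prop :=
  forall j, (j < m)%nat -> (0 < j)%nat -> interleaved_at n j.

Lemma eventually_interleaved :
  (forall y, 0 < y <= 1 ->
     is_lim_seq (fun n => pinv (psis n) y) (pseudo_inverse psi y)) ->
  eventually interleaved.
Proof.
  intros Hcvg.
  apply (filter_forall_lt eventually (fun j n => (0 < j)%nat -> interleaved_at n j)).
  intros j Hjm.
  destruct (Nat.eq_0_gt_0_cases j) as [->|Hj].
  { apply filter_forall. intros n Hj. inversion Hj. }
  apply (filter_imp (fun n => interleaved_at n j)); [auto|].
  pose proof (Rinv_0_lt_compat _ Hm_pos).
  assert (Hyj := level_pos j Hj (Nat.lt_le_incl _ _ Hjm)).
  assert (HySj := level_pos (S j) (Nat.lt_0_succ j) Hjm).
  assert (Hgap : pinv psi (level m (S j)) < pinv psi (level m j)).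
  { apply pinv_decreasing; auto; [lra|]. split; [rewrite level_S|]; lra. }
  pose proof (Hcvg (level m (S j)) HySj) as HcvgS.
  pose proof (Hcvg (level m j) Hyj) as Hcvgj.
  rewrite (pinv_finite psi Hpsi) in HcvgS, Hcvgj; auto.
  unfold interleaved_at. apply filter_and.
  - exact (is_lim_seq_eventually_lt _ _ _ HcvgS Hgap).
  - exact (is_lim_seq_eventually_gt _ _ _ Hcvgj Hgap).
Qed.

Section Interleaved.

Variable n : nat.
Hypothesis Hn : interleaved n.
Variable z : R.
Hypothesis Hz : 0 <= z.

Lemma interleaved_psis_lt : psis n z < psi z + 2 / INR m.
Proof.
  pose proof (Rinv_0_lt_compat _ Hm_pos).
  pose proof (ag_bounds (psis n) (Hpsis n) z Hz).
  destruct (level_bracket (psi z) (ag_bounds psi Hpsi z Hz)) as [k [Hkm [Hlo Hup]]].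
  pose proof (level_S k). pose proof (level_S (S k)).
  enough (psis n z < level m (S (S k))) by lra.
  destruct (Nat.le_gt_cases m (S k)) as [HmSk|HSkm].
  - pose proof (level_ge_1 (S k) HmSk). lra.
  - assert (HySk := level_pos (S k) (Nat.lt_0_succ _) (Nat.lt_le_incl _ _ HSkm)).
    assert (HySSk := level_pos (S (S k)) (Nat.lt_0_succ _) HSkm).
    destruct (Hn (S k) HSkm (Nat.lt_0_succ _)) as [Hsep _].
    apply pinv_gt_iff; auto.
    enough (pinv psi (level m (S k)) < z) by lra.
    apply pinv_gt_iff; auto.
Qed.

Lemma interleaved_psis_gt : psi z - 2 / INR m < psis n z.
Proof.
  pose proof (Rinv_0_lt_compat _ Hm_pos).
  pose proof (ag_bounds (psis n) (Hpsis n) z Hz).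
  destruct (level_bracket (psi z) (ag_bounds psi Hpsi z Hz)) as [k [Hkm [Hlo Hup]]].
  pose proof (level_S k).
  destruct k as [|[|j]].
  - pose proof level_0. lra.
  - pose proof level_0. pose proof (level_S 0). lra.
  - assert (HySj := level_pos (S j) (Nat.lt_0_succ _) (Nat.lt_le_incl _ _ Hkm)).
    assert (HySSj := level_pos (S (S j)) (Nat.lt_0_succ _) Hkm).
    pose proof (level_S (S j)).
    destruct (Hn (S j) Hkm (Nat.lt_0_succ _)) as [_ Hsep].
    assert (z <= pinv psi (level m (S (S j)))) by (apply pinv_le_iff; auto).
    enough (level m (S j) < psis n z) by lra.
    apply pinv_lt_iff; auto. lra.
Qed.

End Interleaved.

End Levels.

Lemma unif_conv_of_pinv_cvg (psi : R -> R) (psis : nat -> R -> R) :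
  archimedean_generator psi ->
  (forall n, archimedean_generator (psis n)) ->
  (forall y, 0 < y <= 1 ->
     is_lim_seq (fun n => pinv (psis n) y) (pseudo_inverse psi y)) ->
  unif_conv_nonneg psis psi.
Proof.
  intros Hpsi Hpsis Hcvg eps Heps.
  destruct (INR_unbounded (2 / eps)) as [m Hm].
  assert (Hm_pos : 0 < INR m) by (pose proof (Rdiv_lt_0_compat 2 eps); lra).
  assert (Hm0 : (0 < m)%nat) by (apply INR_lt; simpl; lra).
  assert (Hprec : 2 / INR m < eps).
  { apply Rlt_div_l; [lra|]. apply Rlt_div_l in Hm; lra. }
  destruct (eventually_interleaved m Hm0 psi psis Hpsi Hcvg) as [N HN].
  exists N. intros n Hn z Hz. apply Rabs_def1.
  - pose proof (interleaved_psis_lt m Hm0 psi psis Hpsi Hpsis n (HN n Hn) z Hz). lra.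
  - pose proof (interleaved_psis_gt m Hm0 psi psis Hpsi Hpsis n (HN n Hn) z Hz). lra.
Qed.

Theorem lemma4p3 (psi : R -> R) (psis : nat -> R -> R) :
  archimedean_generator psi ->
  (forall n : nat, archimedean_generator (psis n)) ->
  ((forall y : R, 0 < y <= 1 ->
      is_lim_seq (fun n => real (pseudo_inverse (psis n) y))
                 (pseudo_inverse psi y))
   <-> unif_conv_nonneg psis psi).
Proof.
  intros Hpsi Hpsis. split.
  - apply unif_conv_of_pinv_cvg; auto.
  - intros Hu. apply pinv_cvg_of_pointwise_cvg; auto.
    intros t Ht. exact (unif_conv_nonneg_is_lim_seq psis psi t Hu Ht).
Qed.
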